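(* Let $V$ be a poset, $m$ a maximal node of $V$ of positive height, and $U$ a splitting of $V$ at $m$ with splitting map $\varphi$. Suppose $U\cong\operatorname{Spec}R$ (as posets) for some commutative Noetherian ring $R$ such that $R/M\cong R/N$ for all maximal ideals $M,N$ of $R$. Then there exists a Noetherian subring $L\subseteq R$ with $\operatorname{Spec}L\cong V$.
   Context: Splitting: for a poset $V$ with a maximal node $m$ of positive height (height = supremum of lengths of chains below the node), a poset $U$ is a splitting of $V$ at $m$ with splitting map $\varphi$ if $\varphi:U\to V$ is surjective order-preserving, there is a finite nonempty set $\mathcal M\subseteq\max U$ of positive-height nodes with $\varphi^{-1}(m)=\mathcal M$, $|\varphi^{-1}(v)|=1$ for $v\ne m$, and whenever $\varphi(x')=x\le y$ there is $y'\ge x'$ with $\varphi(y')=y$. Spectra are ordered by inclusion; $\cong$ means order isomorphism. *)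

From HB Require Import structures.
From mathcomp Require Import all_boot all_order all_algebra.
Set Implicit Arguments. Unset Strict Implicit. Unset Printing Implicit Defensive.
Import Order.TTheory GRing.Theory.
Local Open Scope order_scope.

Section Posets.
Context {d : Order.disp_t} {T : porderType d}.

Definition chain_below (x : T) (n : nat) : Prop :=
  exists s : seq T, size s = n.+1 /\ sorted (fun a b => a < b) s /\ last x s = x.

(* height x = sup of lengths of chains below x; positive height means
   this supremum is > 0, i.e. some chain of positive length ends at x *)
Definition pos_height (x : T) : Prop := exists n, (0 < n)%N /\ chain_below x n.

Definition maximal (x : T) : Prop := forall y : T, x <= y -> y = x.
End Posets.

Definition splitting {dU dV : Order.disp_t} (U : porderType dU) (V : porderType dV)
    (m : V) (phi : U -> V) : Prop :=
  [/\ (forall v : V, exists u : U, phi u = v),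
      (forall x y : U, x <= y -> phi x <= phi y),
      (exists Ms : seq U, [/\ Ms != [::],
          (forall u, u \in Ms -> maximal u /\ pos_height u) &
          (forall u, phi u = m <-> u \in Ms)]),
      (forall v : V, v <> m -> exists! u : U, phi u = v) &
      (forall (x' : U) (y : V), phi x' <= y -> exists y' : U, x' <= y' /\ phi y' = y)].

Local Open Scope ring_scope.
Section Rings.
Variable R : comPzRingType.

Definition subset (A B : R -> Prop) : Prop := forall x, A x -> B x.
Definition seteq (A B : R -> Prop) : Prop := forall x, A x <-> B x.

Definition is_subring (S : R -> Prop) : Prop :=
  [/\ S 1, (forall x y, S x -> S y -> S (x - y)) & (forall x y, S x -> S y -> S (x * y))].

Definition ideal_of (S I : R -> Prop) : Prop :=
  [/\ subset I S, I 0, (forall x y, I x -> I y -> I (x + y)) &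
      (forall s x, S s -> I x -> I (s * x))].

Definition prime_ideal_of (S P : R -> Prop) : Prop :=
  [/\ ideal_of S P, ~ P 1 &
      (forall a b, S a -> S b -> P (a * b) -> P a \/ P b)].

Definition maximal_ideal_of (S M : R -> Prop) : Prop :=
  [/\ ideal_of S M, ~ M 1 &
      (forall J, ideal_of S J -> ~ J 1 -> subset M J -> seteq J M)].

Definition noetherian_of (S : R -> Prop) : Prop :=
  forall I : nat -> R -> Prop, (forall n, ideal_of S (I n)) ->
    (forall n, subset (I n) (I n.+1)) ->
    exists N, forall n, (N <= n)%N -> seteq (I n) (I N).

Definition setT_R : R -> Prop := fun _ => True.

Definition spec_iso_to {d : Order.disp_t} (S : R -> Prop) (T : porderType d)
    : Prop :=
  exists f : T -> R -> Prop,
    [/\ (forall t, prime_ideal_of S (f t)),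
        (forall t t', (t <= t')%O <-> subset (f t) (f t')) &
        (forall P, prime_ideal_of S P -> exists t, seteq P (f t))].

(* R/M and R/N are isomorphic as rings, expressed on representatives:
   g : R -> R induces a well-defined bijective ring map R/M -> R/N. *)
Definition quot_iso (M N : R -> Prop) : Prop :=
  exists g : R -> R,
    [/\ (forall a b, M (a - b) -> N (g a - g b)),
        (forall a b, N (g (a + b) - (g a + g b))),
        (forall a b, N (g (a * b) - g a * g b)),
        N (g 1 - 1) &
        ((forall a, N (g a) -> M a) /\
         (forall y, exists x, N (g x - y)))].
End Rings.

(* Let M_i be the maximal ideals of R lying over the fibre of m, and fix isomorphisms
   g_i : R/M_i ~= R/N onto one of them.  The ring L of those x whose residues g_i x all
   agree contains J = \bigcap_i M_i as an R-ideal, L/J ~= R/N is a field, and by the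
   Chinese remainder theorem R = J + \sum_i L e_i.  The last two facts make L Noetherian:
   an ascending chain of L-ideals is eventually squeezed between an R-ideal and a finite
   dimensional L/J-vector space over it.  As J is an R-ideal inside L, contraction
   matches the primes of R not containing J with the primes of L not containing J,
   while every M_i contracts to the single maximal ideal J; so Spec L is Spec R with
   the M_i collapsed to one point, which is V. *)

From HB Require Import structures.
From mathcomp Require Import all_boot all_order all_algebra.
From mathcomp Require Import ring.
From Stdlib Require Import Classical IndefiniteDescription.
Set Implicit Arguments. Unset Strict Implicit. Unset Printing Implicit Defensive.
Import GRing.Theory.
Local Open Scope ring_scope.

Notation ideal I := (ideal_of (@setT_R _) I).
Notation prime_ideal P := (prime_ideal_of (@setT_R _) P).
Notation max_ideal M := (maximal_ideal_of (@setT_R _) M).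

Section Ideals.
Variable R : comPzRingType.
Implicit Types (A I P M : R -> Prop) (x y : R).

Lemma congr_pred A x y : A x -> x = y -> A y. Proof. by move=> ? <-. Qed.

Lemma ideal0 I : ideal I -> I 0. Proof. by case. Qed.

Lemma idealD I x y : ideal I -> I x -> I y -> I (x + y).
Proof. by case=> _ _ + _; apply. Qed.

Lemma idealMl I s x : ideal I -> I x -> I (s * x).
Proof. by case=> _ _ _; apply. Qed.

Lemma idealMr I s x : ideal I -> I x -> I (x * s).
Proof. by rewrite mulrC; apply: idealMl. Qed.

Lemma idealN I x : ideal I -> I x -> I (- x).
Proof. by move=> hI /(idealMl (-1) hI); rewrite mulN1r. Qed.

Lemma idealB I x y : ideal I -> I x -> I y -> I (x - y).
Proof. by move=> hI hx /(idealN hI); apply: idealD. Qed.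

Lemma ideal_sum I (T : finType) (p : pred T) (F : T -> R) :
  ideal I -> (forall i, p i -> I (F i)) -> I (\sum_(i | p i) F i).
Proof.
by move=> hI hF; apply: (big_ind I) => //; [apply: ideal0 | move=> x y; apply: idealD].
Qed.

Lemma ideal_prod I (T : finType) (p : pred T) (F : T -> R) j :
  ideal I -> p j -> I (F j) -> I (\prod_(i | p i) F i).
Proof. by move=> hI pj hF; rewrite (bigD1 j) //=; apply: idealMr. Qed.

Lemma prod_eq1_mod I (T : finType) (p : pred T) (F : T -> R) :
  ideal I -> (forall i, p i -> I (F i - 1)) -> I (\prod_(i | p i) F i - 1).
Proof.
move=> hI; apply: (big_ind (fun y => I (y - 1))); first by rewrite subrr; apply: ideal0.
move=> x y hx hy; apply: congr_pred (idealD hI (idealMl x hI hy) hx) _; ring.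
Qed.

Lemma prime_ideal_prod P (T : finType) (F : T -> R) :
  prime_ideal P -> P (\prod_i F i) -> exists i, P (F i).
Proof.
case=> _ P1 Pmul; elim: (index_enum T) => [|i s IH]; first by rewrite big_nil.
by rewrite big_cons => /(Pmul _ _ Logic.I Logic.I) [|/IH //]; exists i.
Qed.

Lemma max_ideal_inv M x : max_ideal M -> ~ M x -> exists y, M (x * y - 1).
Proof.
case=> hM M1 Mmax Mx.
pose Mx' z := exists r m, M m /\ z = m + r * x.
have hMx' : ideal Mx'.
  split=> //.
  - by exists 0, 0; rewrite mul0r addr0; split=> //; apply: ideal0.
  - move=> _ _ [r [a [ha ->]]] [r' [b [hb ->]]].
    by exists (r + r'), (a + b); split; [apply: idealD | ring].
  - move=> s _ _ [r [a [ha ->]]].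
    by exists (s * r), (s * a); split; [apply: idealMl | ring].
have [[r [a [ha e1]]]|Mx'1] := classic (Mx' 1).
  by exists r; apply: congr_pred (idealN hM ha) _; rewrite e1; ring.
exfalso; apply/Mx/(Mmax _ hMx' Mx'1).
  by move=> z hz; exists 0, z; rewrite mul0r addr0.
by exists 1, 0; rewrite mul1r add0r; split=> //; apply: ideal0.
Qed.

Lemma max_ideal_prime M : max_ideal M -> prime_ideal M.
Proof.
move=> hM; have [hI M1 _] := hM; split=> // a b _ _ hab.
have [|Ma] := classic (M a); [by left | right].
have [u hu] := max_ideal_inv hM Ma.
apply: congr_pred (idealB hI (idealMl u hI hab) (idealMl b hI hu)) _; ring.
Qed.

Lemma noetherian_maximal (S : R -> Prop) (F : (R -> Prop) -> Prop) I0 :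
  noetherian_of S -> (forall I, F I -> ideal_of S I) -> F I0 ->
  exists2 I, F I & forall I', F I' -> subset I I' -> subset I' I.
Proof.
move=> hN hF FI0; apply: NNPP => nomax.
have grow (X : {I | F I}) : exists Y : {I | F I},
    subset (sval X) (sval Y) /\ ~ subset (sval Y) (sval X).
  case: X => X FX; apply: NNPP => nogrow; apply: nomax; exists X => // Y FY XY.
  by apply: NNPP => YX; apply: nogrow; exists (exist _ Y FY).
have [next hnext] := functional_choice _ grow.
pose chain n := iter n next (exist _ I0 FI0).
have [N hN'] := hN (fun n => sval (chain n)) (fun n => hF _ (svalP (chain n)))
  (fun n => (hnext (chain n)).1).
by apply: (hnext (chain N)).2 => x /(hN' N.+1 (leqnSn N)).
Qed.

Lemma noetherian_max_ideal_sup I : noetherian_of (@setT_R R) ->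
  ideal I -> ~ I 1 -> exists2 M, max_ideal M & subset I M.
Proof.
move=> hN hI I1.
have [M [hM M1 IM] Mmax] := noetherian_maximal
  (F := fun J => [/\ ideal J, ~ J 1 & subset I J]) hN (fun J => fun '(And3 h _ _) => h)
  (And3 hI I1 (fun x h => h)).
exists M => //; split=> // J hJ J1 MJ x; split; last exact: MJ.
by apply: (Mmax J) => //; split=> // y /IM /MJ.
Qed.

End Ideals.

Section Combinations.
Variable R : comPzRingType.
Implicit Types (L A B C K : R -> Prop) (w : seq R) (x y : R).

Definition submodule L A : Prop :=
  [/\ A 0, (forall x y, A x -> A y -> A (x - y)) & (forall c x, L c -> A x -> A (c * x))].

(* [comb C B w x] : x lies in B + \sum_(a <- w) C a. *)
Fixpoint comb C B w x : Prop :=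
  if w is a :: w' then exists2 c, C c & comb C B w' (x - c * a) else B x.

Lemma submodule0 L A : submodule L A -> A 0. Proof. by case. Qed.

Lemma submoduleB L A x y : submodule L A -> A x -> A y -> A (x - y).
Proof. by case=> _ + _; apply. Qed.

Lemma submoduleM L A c x : submodule L A -> L c -> A x -> A (c * x).
Proof. by case=> _ _; apply. Qed.

Lemma submoduleD L A x y : submodule L A -> A x -> A y -> A (x + y).
Proof.
case=> A0 AB _ Ax Ay; apply: congr_pred (AB _ _ Ax (AB _ _ A0 Ay)) _; ring.
Qed.

Lemma subring_submodule L : is_subring L -> submodule L L.
Proof. by case=> L1 LB LM; split=> //; rewrite -(subrr 1); apply: LB. Qed.

Lemma subring0 L : is_subring L -> L 0.
Proof. by case/subring_submodule. Qed.

Lemma ideal_submodule L I : ideal I -> submodule L I.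
Proof.
move=> hI; split=> [|x y|c x _]; [exact: ideal0 | exact: idealB | exact: idealMl].
Qed.

Lemma subringN1 L : is_subring L -> L (-1).
Proof. by move=> hL; have [L1 LB _] := hL; rewrite -sub0r; apply: LB (subring0 hL) L1. Qed.

Lemma ideal_of_submodule L I : is_subring L -> ideal_of L I -> submodule L I.
Proof.
move=> hL [_ I0 ID IM]; split=> // x y Ix Iy.
by rewrite -mulN1r; apply: ID (IM _ _ (subringN1 hL) Iy).
Qed.

Lemma submoduleI L A B : submodule L A -> submodule L B ->
  submodule L (fun x => A x /\ B x).
Proof.
case=> A0 AB AM [B0 BB BM]; split=> // [x y [Ax Bx] [Ay By] | c x Lc [Ax Bx]].
  by split; [apply: AB | apply: BB].
by split; [apply: AM | apply: BM].
Qed.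

Lemma comb_base C B w x : C 0 -> B x -> comb C B w x.
Proof.
move=> C0; elim: w x => [|a w IH] x //= Bx.
by exists 0 => //; rewrite mul0r subr0; apply: IH.
Qed.

Lemma comb_submodule L B w : is_subring L -> submodule L B -> submodule L (comb L B w).
Proof.
move=> hL hB; have [_ LB LM] := hL; have [B0 BB BM] := hB.
have L0 := subring0 hL.
split=> [|x y|c x Lc]; first exact: comb_base.
  elim: w x y => [|a w IH] x y /=; first exact: BB.
  move=> [c Lc hx] [c' Lc' hy]; exists (c - c'); first exact: LB.
  by apply: congr_pred (IH _ _ hx hy) _; ring.
elim: w x => [|a w IH] x /=; first exact: BM.
move=> [c' Lc' hx]; exists (c * c'); first exact: LM.
by apply: congr_pred (IH _ hx) _; ring.
Qed.

Lemma comb_mono C B B' w x : subset B B' -> comb C B w x -> comb C B' w x.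
Proof.
move=> BB'; elim: w x => [|a w IH] x /=; first exact: BB'.
by case=> c Cc hx; exists c => //; apply: IH.
Qed.

Lemma comb_catl C B w w' x : C 0 -> comb C B w x -> comb C B (w ++ w') x.
Proof.
move=> C0; elim: w x => [|a w IH] x /=; first exact: comb_base.
by case=> c Cc hx; exists c => //; apply: IH.
Qed.

Lemma comb_catr C B w w' x : C 0 -> comb C B w' x -> comb C B (w ++ w') x.
Proof.
move=> C0; elim: w x => [|a w IH] x //= hx.
by exists 0 => //; rewrite mul0r subr0; apply: IH.
Qed.

Lemma comb_mem C B w a : C 0 -> C 1 -> B 0 -> a \in w -> comb C B w a.
Proof.
move=> C0 C1 B0; elim: w => [|b w IH] //; rewrite inE => /orP[/eqP-> | aw] /=.
  by exists 1 => //; rewrite mul1r subrr; apply: comb_base.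
by exists 0 => //; rewrite mul0r subr0; apply: IH.
Qed.

Lemma comb_mulr C B w x a : comb C B w x ->
  comb C (fun y => exists2 b, B b & y = b * a) [seq e * a | e <- w] (x * a).
Proof.
elim: w x => [|e w IH] x /=; first by exists x.
by case=> c Cc hx; exists c => //; apply: congr_pred (IH _ hx) _; ring.
Qed.

Lemma comb_big C B (T : eqType) (s : seq T) (e c : T -> R) x :
  (forall i, C (c i)) -> B (x - \sum_(i <- s) c i * e i) -> comb C B [seq e i | i <- s] x.
Proof.
move=> Cc; elim: s x => [|i s IH] x /=; first by rewrite big_nil subr0.
rewrite big_cons => hB; exists (c i) => //; apply: IH.
by apply: congr_pred hB _; ring.
Qed.

End Combinations.

Section IdealProducts.
Variable R : comPzRingType.
Implicit Types (A C I J L : R -> Prop) (x : R).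

Inductive ideal_mul C A : R -> Prop :=
| ideal_mul0 : ideal_mul C A 0
| ideal_mulD c a x : C c -> A a -> ideal_mul C A x -> ideal_mul C A (c * a + x).

Lemma ideal_mul_ideal C A : (forall s c, C c -> C (s * c)) -> ideal (ideal_mul C A).
Proof.
move=> CM; split=> // [|x y|s x _]; first exact: ideal_mul0.
  elim=> [|c a x' Cc Aa _ IH] Iy; first by rewrite add0r.
  by rewrite -addrA; apply: ideal_mulD => //; apply: IH.
elim=> [|c a x' Cc Aa _ IH]; first by rewrite mulr0; apply: ideal_mul0.
by rewrite mulrDr mulrA; apply: ideal_mulD => //; apply: CM.
Qed.

Lemma ideal_mul_mono C A A' : subset A A' -> subset (ideal_mul C A) (ideal_mul C A').
Proof.
move=> AA' x; elim=> [|c a x' Cc Aa _ IH]; first exact: ideal_mul0.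
by apply: ideal_mulD => //; apply: AA'.
Qed.

Lemma ideal_mul_mem C A x : C 1 -> A x -> ideal_mul C A x.
Proof. by move=> C1 Ax; rewrite -[x]addr0 -[x]mul1r; apply: ideal_mulD (ideal_mul0 _ _). Qed.

Lemma ideal_mul_absorb J A j x : ideal J -> J j ->
  ideal_mul (@setT_R R) A x -> ideal_mul J A (j * x).
Proof.
move=> hJ Jj; elim=> [|c a x' _ Aa _ IH]; first by rewrite mulr0; apply: ideal_mul0.
by rewrite mulrDr mulrA; apply: ideal_mulD => //; apply: idealMr.
Qed.

Lemma ideal_mul_sub J L I : subset J L -> ideal_of L I -> subset (ideal_mul J I) I.
Proof.
move=> JL [_ I0 ID IM] x; elim=> [|c a x' Jc Ia _ IH] //.
by apply: ID IH; apply: IM Ia; apply: JL.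
Qed.

End IdealProducts.

Section Noetherian.
Variable R : comPzRingType.
Implicit Types (A I K : R -> Prop) (t w : seq R).

Definition gen_ideal t : R -> Prop := comb (@setT_R R) (fun x => x = 0) t.

Lemma submodule_ideal A : submodule (@setT_R R) A -> ideal A.
Proof.
by move=> hA; have [A0 _ AM] := hA; split=> // x y; exact: submoduleD hA.
Qed.

Lemma gen_ideal_ideal t : ideal (gen_ideal t).
Proof.
apply/submodule_ideal/comb_submodule => //.
by split=> [|x y -> ->|c x _ ->]; rewrite ?subr0 ?mulr0.
Qed.

Lemma noetherian_fg I : noetherian_of (@setT_R R) -> ideal I ->
  exists2 t, (forall x, x \in t -> I x) & subset I (gen_ideal t).
Proof.
move=> hN hI.
pose F G := exists2 t, (forall x, x \in t -> I x) & G = gen_ideal t.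
have [_ [t tI ->] tmax] : exists2 G, F G & forall G', F G' -> subset G G' -> subset G' G.
  apply: (noetherian_maximal (I0 := gen_ideal [::]) hN); last by exists [::].
  by move=> _ [t _ ->]; apply: gen_ideal_ideal.
exists t => // x Ix; apply: NNPP => tx; apply: tx.
apply: (tmax (gen_ideal (x :: t))).
- by exists (x :: t) => // y; rewrite inE => /orP[/eqP-> | /tI].
- by move=> y; apply: (@comb_catr _ _ _ [:: x]).
- by apply: comb_mem; rewrite ?inE ?eqxx.
Qed.

Lemma chain_subset (N : nat -> R -> Prop) : (forall n, subset (N n) (N n.+1)) ->
  forall n n', (n <= n')%N -> subset (N n) (N n').
Proof.
move=> hN n; elim=> [|n' IH]; first by rewrite leqn0 => /eqP->.
by rewrite leq_eqVlt => /orP[/eqP-> // | /IH hn x /hn]; apply: hN.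
Qed.

End Noetherian.

Section FieldQuotient.
Variables (R : comPzRingType) (L J : R -> Prop).
Hypothesis L_subring : is_subring L.
Hypothesis L_mod_J_field : forall l, L l -> ~ J l -> exists2 l', L l' & J (l * l' - 1).

Let L0 : L 0. Proof. exact: subring0. Qed.
Let L1 : L 1. Proof. by case: L_subring. Qed.

(* Over the field L/J, the quotient (K + \sum_(a <- w) L a) / K is finite dimensional. *)
Lemma comb_chain_stationary K w (N : nat -> R -> Prop) :
  submodule L K -> (forall n, submodule L (N n)) ->
  (forall n, subset K (N n)) -> (forall n, subset (N n) (comb L K w)) ->
  (forall j a, J j -> a \in w -> K (j * a)) ->
  (forall n, subset (N n) (N n.+1)) ->
  exists n0, forall n, (n0 <= n)%N -> subset (N n) (N n0).
Proof.
move=> hK; elim: w N => [|a w IH] N hN KN Ncomb Jw Nmono.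
  by exists 0%N => n _ x /Ncomb /KN.
have Nle := chain_subset Nmono.
have hcomb := comb_submodule w L_subring hK.
have K0 := submodule0 hK.
have [n1 hn1] : exists n1, forall n, (n1 <= n)%N ->
    subset (fun x => N n x /\ comb L K w x) (fun x => N n1 x /\ comb L K w x).
  apply: IH => [n | n x Kx | n x [] // | j b Jj bw | n x [Nx wx]].
  - exact: submoduleI.
  - by split; [apply: KN | apply: comb_base].
  - by apply: Jw; rewrite // inE bw orbT.
  - by split=> //; apply: Nmono.
pose coef n c := L c /\ exists2 y, comb L K w y & N n (c * a + y).
have [n0 [n10 hn0]] : exists n0, (n1 <= n0)%N /\ forall n c, (n0 <= n)%N ->
    L c -> coef n c -> coef n0 c.
  have [[n2 [_ [y1 wy1 hy1]]] | no_unit] := classic (exists n2, coef n2 1).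
    exists (maxn n1 n2); split=> [|n c _ Lc _]; first exact: leq_maxl.
    split=> //; exists (c * y1); first exact: submoduleM hcomb Lc wy1.
    apply: congr_pred (submoduleM (hN _) Lc (Nle _ _ (leq_maxr n1 n2) _ hy1)) _; ring.
  exists n1; split=> // n c hn Lc [_ [y wy hy]].
  have [Jc | nJc] := classic (J c).
    split=> //; exists 0; first exact: comb_base.
    by rewrite addr0; apply: KN; apply: Jw; rewrite ?inE ?eqxx.
  exfalso; have [c' Lc' Jcc'] := L_mod_J_field Lc nJc; apply: no_unit; exists n.
  split=> //; exists (c' * y); first exact: submoduleM hcomb Lc' wy.
  have Nca : N n ((c * c' - 1) * a) by apply: KN; apply: Jw; rewrite ?inE ?eqxx.
  apply: congr_pred (submoduleB (hN n) (submoduleM (hN n) Lc' hy) Nca) _; ring.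
exists n0 => n hn x Nx.
have /= [c Lc wx] := Ncomb n x Nx.
have [_ [y wy hy]] : coef n0 c.
  apply: (hn0 n) => //; split=> //; exists (x - c * a) => //.
  by apply: congr_pred Nx _; ring.
have hz : N n (x - (c * a + y)) /\ comb L K w (x - (c * a + y)).
  split; first by apply: submoduleB (hN n) Nx (Nle _ _ hn _ hy).
  by apply: congr_pred (submoduleB hcomb wx wy) _; ring.
have [Nz _] := hn1 n (leq_trans n10 hn) _ hz.
apply: congr_pred (submoduleD (hN n0) (Nle _ _ n10 _ Nz) hy) _; ring.
Qed.

Hypothesis J_ideal : ideal J.
Hypothesis J_sub_L : subset J L.

Lemma gen_ideal_comb K w t : submodule L K -> (forall r, comb L J w r) ->
  (forall j b, J j -> b \in t -> K (j * b)) ->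
  subset (gen_ideal t) (comb L K (flatten [seq [seq e * b | e <- w] | b <- t])).
Proof.
move=> hK Rcomb; elim: t => [|b t IH] Jt x /=; first by move->; apply: submodule0 hK.
case=> c _ hx.
have hc : comb L K [seq e * b | e <- w] (c * b).
  apply: comb_mono (comb_mulr b (Rcomb c)) => _ [j Jj ->].
  by apply: Jt; rewrite ?inE ?eqxx.
have ht : comb L K (flatten [seq [seq e * b | e <- w] | b <- t]) (x - c * b).
  by apply: IH hx => j b' Jj b't; apply: Jt; rewrite // inE b't orbT.
have comb_sub := comb_submodule ([seq e * b | e <- w] ++ [seq e * b0 | b0 <- t, e <- w])
  L_subring hK.
apply: congr_pred (submoduleD comb_sub (comb_catl _ L0 hc) (comb_catr _ L0 ht)) _; ring.
Qed.

Theorem noetherian_descent w : noetherian_of (@setT_R R) ->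
  (forall r, comb L J w r) -> noetherian_of L.
Proof.
move=> hN Rcomb I hI Imono.
have Ile := chain_subset Imono.
pose T n := ideal_mul (@setT_R R) (I n).
pose K n := ideal_mul J (I n).
have T_ideal n : ideal (T n) by apply: ideal_mul_ideal.
have K_ideal n : ideal (K n) by apply: ideal_mul_ideal => s c; apply: idealMl.
have Tmono n : subset (T n) (T n.+1) by apply/ideal_mul_mono/Imono.
have Kmono n : subset (K n) (K n.+1) by apply/ideal_mul_mono/Imono.
have Kle := chain_subset Kmono.
have [n0 hn0] := hN T T_ideal Tmono.
have [t tT Tt] := noetherian_fg hN (T_ideal n0).
have Jt j b : J j -> b \in t -> K n0 (j * b).
  by move=> Jj /tT; apply: ideal_mul_absorb.
have [n1 hn1] : exists n1, forall n, (n1 <= n)%N -> subset (I (n + n0)) (I (n1 + n0)).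
  apply: (comb_chain_stationary (K := K n0)
    (w := flatten [seq [seq e * b | e <- w] | b <- t])).
  - exact: ideal_submodule.
  - by move=> n; apply: ideal_of_submodule.
  - by move=> n x /(Kle _ _ (leq_addl n n0)); apply: ideal_mul_sub J_sub_L (hI _) x.
  - move=> n x Ix; apply: gen_ideal_comb (ideal_submodule _ (K_ideal n0)) Rcomb Jt _ _.
    by apply/Tt/(hn0 (n + n0) (leq_addl _ _))/ideal_mul_mem.
  - move=> j _ Jj /flatten_mapP[b bt /mapP[e _ ->]].
    by rewrite mulrA; apply: Jt => //; apply: idealMr.
  - by move=> n; apply: Imono.
exists (n1 + n0)%N => n hn x; split; last exact: Ile.
have hn0n : (n0 <= n)%N by apply: leq_trans hn; apply: leq_addl.
by rewrite -(subnK hn0n); apply: hn1; rewrite leq_subRL // addnC.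
Qed.

End FieldQuotient.

Section Contraction.
Variables (R : comPzRingType) (L : R -> Prop).
Hypothesis L_subring : is_subring L.
Implicit Types (P Q J : R -> Prop) (x y j : R).

Definition contract P x : Prop := L x /\ P x.

Lemma contract_prime P : prime_ideal P -> prime_ideal_of L (contract P).
Proof.
case=> [[_ P0 PD PM] P1 Pmul]; have L0 := subring0 L_subring.
have [_ _ LM] := L_subring; have LD := submoduleD (subring_submodule L_subring).
split; first split.
- by move=> x [].
- by [].
- by move=> x y [Lx Px] [Ly Py]; split; [apply: LD | apply: PD].
- by move=> s x Ls [Lx Px]; split; [apply: LM | apply: PM].
- by case.
- by move=> x y Lx Ly [_ /(Pmul _ _ Logic.I Logic.I) [] ?]; [left | right].
Qed.

Lemma contract_le P P' j : ideal P -> prime_ideal P' -> ~ P' j -> (forall r, L (r * j)) ->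
  subset (contract P) (contract P') -> subset P P'.
Proof.
move=> hP [_ _ P'mul] P'j Lj PP' x Px.
have [_ P'xj] := PP' (x * j) (conj (Lj x) (idealMr j hP Px)).
by case: (P'mul _ _ Logic.I Logic.I P'xj).
Qed.

Lemma conductor_prime Q j : (forall r, L (r * j)) -> prime_ideal_of L Q -> ~ Q j ->
  prime_ideal (fun r => Q (r * j)) /\ seteq (contract (fun r => Q (r * j))) Q.
Proof.
move=> Lj [[QL Q0 QD QM] Q1 Qmul] Qj.
have L1 : L 1 by case: L_subring.
have Lj' : L j by rewrite -[j]mul1r.
split; last first.
  move=> x; split=> [[Lx Qxj] | Qx]; first by case: (Qmul _ _ Lx Lj' Qxj).
  by split; [apply: QL | rewrite mulrC; apply: QM].
split; first split.
- by [].
- by rewrite mul0r.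
- by move=> x y Qx Qy; rewrite mulrDl; apply: QD.
- move=> s x _ Qx.
  have Qsxjj : Q ((s * x * j) * j).
    by apply: congr_pred (QM _ _ (Lj s) Qx) _; ring.
  by case: (Qmul _ _ (Lj _) Lj' Qsxjj).
- by rewrite mul1r.
- move=> x y _ _ Qxyj.
  have Qxjyj : Q ((x * j) * (y * j)) by apply: congr_pred (QM _ _ Lj' Qxyj) _; ring.
  by case: (Qmul _ _ (Lj _) (Lj _) Qxjyj); [left | right].
Qed.

Lemma prime_sup_field Q J : (forall l, L l -> ~ J l -> exists2 l', L l' & J (l * l' - 1)) ->
  prime_ideal_of L Q -> subset J Q -> seteq Q J.
Proof.
move=> Linv [hQ Q1 _] JQ x; split=> [Qx | /JQ //].
apply: NNPP => Jx; have [QL _ QD QM] := hQ.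
have [l' Ll' Jxl'] := Linv x (QL _ Qx) Jx.
have LN1 := subringN1 L_subring.
apply: Q1; apply: congr_pred (QD _ _ (QM _ _ Ll' Qx) (QM _ _ LN1 (JQ _ Jxl'))) _; ring.
Qed.

End Contraction.

Section QuotientMaps.
Variables (R : comPzRingType) (M N : R -> Prop) (g : R -> R).

(* [quot_iso M N] unfolds to [exists g, quot_iso_by M N g]. *)
Definition quot_iso_by : Prop :=
  [/\ (forall a b, M (a - b) -> N (g a - g b)),
      (forall a b, N (g (a + b) - (g a + g b))),
      (forall a b, N (g (a * b) - g a * g b)),
      N (g 1 - 1) &
      ((forall a, N (g a) -> M a) /\ (forall y, exists x, N (g x - y)))].

Hypotheses (N_ideal : ideal N) (g_iso : quot_iso_by).

Lemma quot_map0 : N (g 0).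
Proof.
have [_ gD _ _ _] := g_iso.
by apply: congr_pred (idealN N_ideal (gD 0 0)) _; rewrite addr0; ring.
Qed.

Lemma quot_mapB x y : N (g (x - y) - (g x - g y)).
Proof.
have [_ gD _ _ _] := g_iso; have := gD (x - y) y; rewrite subrK => hN.
by apply: congr_pred (idealN N_ideal hN) _; ring.
Qed.

Lemma quot_map_ideal x : M x -> N (g x).
Proof.
have [gM _ _ _ _] := g_iso => Mx.
have := gM x 0; rewrite subr0 => /(_ Mx) hN.
by apply: congr_pred (idealD N_ideal hN quot_map0) _; ring.
Qed.

End QuotientMaps.

Section Gluing.
Variables (R : comPzRingType) (I : finType) (M : I -> R -> Prop) (N : R -> Prop).
Variable g : I -> R -> R.
Hypothesis M_max : forall i, max_ideal (M i).
Hypothesis M_incomparable : forall i j, i != j -> ~ subset (M i) (M j).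
Hypothesis N_ideal : ideal N.
Hypothesis g_iso : forall i, quot_iso_by (M i) N (g i).
Implicit Types (P : R -> Prop) (x y : R).

(* [glued] consists of the x whose residues in the R/M_i ~= R/N all coincide. *)
Definition glued x : Prop := forall i j, N (g i x - g j x).
Definition common x : Prop := forall i, M i x.

Let M_ideal i : ideal (M i). Proof. by case: (M_max i). Qed.

Lemma common_ideal : ideal common.
Proof.
split=> // [i|x y Mx My i|s x _ Mx i]; first exact: ideal0.
  exact: idealD.
exact: idealMl.
Qed.

Lemma common_proper (i : I) : ~ common 1.
Proof. by case: (M_max i) => _ + _ /(_ i). Qed.

Lemma glued_subring : is_subring glued.
Proof.
split=> [i j|x y Lx Ly i j|x y Lx Ly i j].
- have [_ _ _ gi1 _] := g_iso i; have [_ _ _ gj1 _] := g_iso j.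
  by apply: congr_pred (idealB N_ideal gi1 gj1) _; ring.
- have hB := idealB N_ideal (quot_mapB N_ideal (g_iso i) x y)
    (quot_mapB N_ideal (g_iso j) x y).
  by apply: congr_pred (idealD N_ideal hB (idealB N_ideal (Lx i j) (Ly i j))) _; ring.
- have [_ _ giM _ _] := g_iso i; have [_ _ gjM _ _] := g_iso j.
  have hM := idealB N_ideal (giM x y) (gjM x y).
  have hxy := idealD N_ideal (idealMl (g i x) N_ideal (Ly i j))
    (idealMl (g j y) N_ideal (Lx i j)).
  by apply: congr_pred (idealD N_ideal hM hxy) _; ring.
Qed.

Lemma common_glued : subset common glued.
Proof.
move=> x Mx i j; have gM k := quot_map_ideal N_ideal (g_iso k) (Mx k).
exact: idealB.
Qed.

Lemma glued_common i x : glued x -> M i x -> common x.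
Proof.
move=> Lx Mix j; have [_ _ _ _ [gjinj _]] := g_iso j; apply: gjinj.
have gMi := quot_map_ideal N_ideal (g_iso i) Mix.
apply: congr_pred (idealB N_ideal gMi (Lx i j)) _; ring.
Qed.

Lemma contract_common i : seteq (contract glued (M i)) common.
Proof.
move=> x; split=> [[Lx /(glued_common Lx)] // | Jx].
by split; [apply: common_glued | apply: Jx].
Qed.

Lemma comaximal i j : i != j -> exists2 a, M j a & M i (a - 1).
Proof.
move=> ij; have [x Mjx Mix] : exists2 x, M j x & ~ M i x.
  apply: NNPP => nx; apply: (@M_incomparable j i); first by rewrite eq_sym.
  by move=> x Mjx; apply: NNPP => Mix; apply: nx; exists x.
have [y hy] := max_ideal_inv (M_max i) Mix.
by exists (x * y) => //; apply: idealMr.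
Qed.

Lemma crt_basis : exists e : I -> R, forall (x : I -> R) i, M i (\sum_j x j * e j - x i).
Proof.
have ex_a (ij : I * I) : exists b, ij.1 != ij.2 -> M ij.2 b /\ M ij.1 (b - 1).
  case: ij => i j /=; have [-> | ij] := eqVneq i j; first by exists 0; case/negP.
  by have [b ? ?] := comaximal ij; exists b.
have [a ha] := functional_choice _ ex_a.
exists (fun i => \prod_(j | j != i) a (i, j)) => x i.
have e1 : M i (\prod_(j | j != i) a (i, j) - 1).
  by apply: prod_eq1_mod => // j ji; apply: (ha (i, j) _).2; rewrite eq_sym.
have e0 j : j != i -> M i (x j * \prod_(k | k != j) a (j, k)).
  move=> ji; apply: idealMl (M_ideal i) _.
  by apply: (ideal_prod (M_ideal i) _ (ha (j, i) ji).1); rewrite /= eq_sym.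
rewrite (bigD1 i) //=.
have Mi_sum := ideal_sum (M_ideal i) e0.
by apply: congr_pred (idealD (M_ideal i) (idealMl (x i) (M_ideal i) e1) Mi_sum) _; ring.
Qed.

Lemma glued_lift i r : exists2 l, glued l & M i (l - r).
Proof.
have [e he] := crt_basis.
have ex_y j : exists y, N (g j y - g i r).
  by have [_ _ _ _ [_ gj_onto]] := g_iso j; apply: gj_onto.
have [y hy] := functional_choice _ ex_y.
pose l := \sum_j y j * e j.
have gl j : N (g j l - g i r).
  have [gj_mod _ _ _ _] := g_iso j.
  by apply: congr_pred (idealD N_ideal (gj_mod _ _ (he y j)) (hy j)) _; ring.
exists l => [j k|]; first by apply: congr_pred (idealB N_ideal (gl j) (gl k)) _; ring.
have [_ _ _ _ [gi_inj _]] := g_iso i; apply: gi_inj.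
by apply: congr_pred (idealD N_ideal (quot_mapB N_ideal (g_iso i) l r) (gl i)) _; ring.
Qed.

Lemma glued_inv l : glued l -> ~ common l -> exists2 l', glued l' & common (l * l' - 1).
Proof.
move=> Ll Jl; have [i Mil] : exists i, ~ M i l.
  by apply: NNPP => h; apply: Jl => i; apply: NNPP => Mil; apply: h; exists i.
have [u hu] := max_ideal_inv (M_max i) Mil.
have [l' Ll' Mil'] := glued_lift i u.
have [L1 LB LM] := glued_subring.
exists l' => //; apply: (@glued_common i); first exact: LB (LM _ _ Ll Ll') L1.
by apply: congr_pred (idealD (M_ideal i) (idealMl l (M_ideal i) Mil') hu) _; ring.
Qed.

Lemma glued_span : exists w, forall r, comb glued common w r.
Proof.
have [e he] := crt_basis.
exists [seq e i | i <- index_enum I] => r.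
have ex_c i : exists c, glued c /\ M i (c - r).
  by have [l ? ?] := glued_lift i r; exists l.
have [c hc] := functional_choice _ ex_c.
apply: comb_big (fun i => (hc i).1) _ => i.
by apply: congr_pred (idealN (M_ideal i) (idealD (M_ideal i) (he c i) (hc i).2)) _; ring.
Qed.

Theorem glued_noetherian : noetherian_of (@setT_R R) -> noetherian_of glued.
Proof.
move=> hN; have [w hw] := glued_span.
exact: noetherian_descent glued_subring glued_inv common_ideal common_glued w hN hw.
Qed.

Lemma common_prime_sub P : prime_ideal P -> subset common P -> exists i, subset (M i) P.
Proof.
move=> hP JP; apply: NNPP => nsub.
have ex_b i : exists b, M i b /\ ~ P b.
  apply: NNPP => h; apply: nsub; exists i => x Mix.
  by apply: NNPP => Px; apply: h; exists x.
have [b hb] := functional_choice _ ex_b.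
have Jb : common (\prod_i b i).
  by move=> i; apply: (ideal_prod (M_ideal i) _ (hb i).1).
by have [i /(hb i).2] := prime_ideal_prod hP (JP _ Jb).
Qed.

Lemma contract_sub_common (i0 : I) P : prime_ideal P ->
  subset (contract glued P) common -> exists i, subset P (M i).
Proof.
move=> hP PJ; have [hPI _ _] := hP; apply: NNPP => nsub.
have ex_b i : exists b, P b /\ M i (b - 1).
  have [x Px Mix] : exists2 x, P x & ~ M i x.
    apply: NNPP => h; apply: nsub; exists i => x Px.
    by apply: NNPP => Mix; apply: h; exists x.
  have [y hy] := max_ideal_inv (M_max i) Mix.
  by exists (x * y); split=> //; apply: idealMr.
have [b hb] := functional_choice _ ex_b.
have [z Pz Jz1] : exists2 z, P z & common (z - 1).
  have [e he] := crt_basis; exists (\sum_i b i * e i).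
    by apply: ideal_sum => // i _; apply: idealMr hPI (hb i).1.
  by move=> i; apply: congr_pred (idealD (M_ideal i) (he b i) (hb i).2) _; ring.
have Lz : glued z.
  have [L1 _ _] := glued_subring.
  apply: congr_pred (submoduleD (subring_submodule glued_subring) (common_glued Jz1) L1) _.
  ring.
apply: (common_proper i0).
by apply: congr_pred (idealB common_ideal (PJ _ (conj Lz Pz)) Jz1) _; ring.
Qed.

End Gluing.

Section Splitting.
Local Open Scope order_scope.
Variables (dU dV : Order.disp_t) (U : porderType dU) (V : porderType dV).
Variables (m : V) (phi : U -> V) (Ms : seq U).
Hypothesis phi_mono : forall x y : U, x <= y -> phi x <= phi y.
Hypothesis phi_lift : forall (x : U) (y : V), phi x <= y -> exists y', x <= y' /\ phi y' = y.
Hypothesis phi_fibre_m : forall u, phi u = m <-> u \in Ms.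
Hypothesis phi_fibre : forall v, v <> m -> exists! u, phi u = v.

Lemma splitting_inj u u' : phi u = phi u' -> phi u' <> m -> u = u'.
Proof.
move=> e u'm; have [w [_ hw]] := phi_fibre u'm.
by rewrite -(hw u) // -(hw u').
Qed.

Lemma splitting_le u u' : phi u' <> m -> phi u <= phi u' <-> u <= u'.
Proof.
move=> u'm; split=> [/phi_lift [y [uy /splitting_inj]] | /phi_mono //].
by move=> /(_ u'm) <-.
Qed.

Lemma splitting_le_m u : phi u <= m <-> exists2 u', u' \in Ms & u <= u'.
Proof.
split=> [/phi_lift [y [uy /phi_fibre_m yMs]] | [u' /phi_fibre_m <- /phi_mono //]].
by exists y.
Qed.

End Splitting.

Section SpectrumOfSplitting.
Variables (dU dV : Order.disp_t) (U : porderType dU) (V : porderType dV).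
Variables (m : V) (phi : U -> V) (Ms : seq U).
Hypothesis phi_mono : forall x y : U, (x <= y)%O -> (phi x <= phi y)%O.
Hypothesis phi_lift : forall (x : U) (y : V),
  (phi x <= y)%O -> exists y', (x <= y')%O /\ phi y' = y.
Hypothesis phi_fibre_m : forall u, phi u = m <-> u \in Ms.
Hypothesis phi_fibre : forall v, v <> m -> exists! u, phi u = v.
Hypothesis Ms_max : forall u, u \in Ms -> maximal u.

Variables (R : comPzRingType) (f : U -> R -> Prop).
Hypothesis R_noetherian : noetherian_of (@setT_R R).
Hypothesis f_prime : forall u, prime_ideal (f u).
Hypothesis f_le : forall u u', (u <= u')%O <-> subset (f u) (f u').
Hypothesis f_onto : forall P, prime_ideal P -> exists u, seteq P (f u).

Lemma spec_max_ideal u : maximal u -> max_ideal (f u).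
Proof.
move=> umax; have [hI fu1 _] := f_prime u; split=> // J hJ J1 fuJ x.
split=> [Jx|]; last exact: fuJ.
have [M hM JM] := noetherian_max_ideal_sup R_noetherian hJ J1.
have [u' hu'] := f_onto (max_ideal_prime hM).
have uu' : (u <= u')%O by apply/f_le => y /fuJ /JM /hu'.
by rewrite -(umax _ uu'); apply/hu'/JM.
Qed.

Local Notation fibre := (fun i : seq_sub Ms => f (val i)).

Lemma fibre_max i : max_ideal (fibre i).
Proof. exact/spec_max_ideal/Ms_max/valP. Qed.

Lemma fibre_incomparable i j : i != j -> ~ subset (fibre i) (fibre j).
Proof.
move=> ij /f_le /(Ms_max (valP i)) eji.
by move: ij; rewrite -(inj_eq val_inj) eji eqxx.
Qed.

Variables (N : R -> Prop) (g : seq_sub Ms -> R -> R).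
Hypothesis N_ideal : ideal N.
Hypothesis g_iso : forall i, quot_iso_by (fibre i) N (g i).
Variable pre : V -> U.
Hypothesis phi_pre : forall v, phi (pre v) = v.

Local Notation L := (glued N g).
Local Notation J := (common fibre).
Local Notation F v := (contract L (f (pre v))).

Let L_subring : is_subring L := glued_subring N_ideal g_iso.
Let J_sub_L : subset J L := common_glued N_ideal g_iso.
Let J_ideal : ideal J := common_ideal fibre_max.

Lemma common_sub_fibre u : subset J (f u) <-> u \in Ms.
Proof.
split=> [Jfu | uMs x Jx]; last exact: (Jx (SeqSub uMs)).
have [i /f_le ifu] := common_prime_sub fibre_max (f_prime u) Jfu.
by rewrite (Ms_max (valP i) ifu); apply: valP.
Qed.

Lemma contract_fibre u (uMs : u \in Ms) : seteq (contract L (f u)) J.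
Proof.
exact: (contract_common N_ideal g_iso (SeqSub uMs)).
Qed.

Lemma pre_m_mem : pre m \in Ms. Proof. by apply/phi_fibre_m. Qed.

Lemma spec_le v v' : (v <= v')%O <-> subset (F v) (F v').
Proof.
have [-> | v'm] := eqVneq v' m.
  rewrite -{1}(phi_pre v) (splitting_le_m phi_mono phi_lift phi_fibre_m); split.
    move=> [u' u'Ms /f_le vu'] x [Lx /vu' fu'x].
    by apply/(contract_fibre pre_m_mem)/(contract_fibre u'Ms).
  move=> FvJ; have [i vi] : exists i, subset (f (pre v)) (fibre i).
    apply: (contract_sub_common fibre_max fibre_incomparable N_ideal g_iso
      (SeqSub pre_m_mem) (f_prime _)).
    by move=> x /FvJ /(contract_fibre pre_m_mem).
  by exists (val i); [apply: valP | apply/f_le].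
have v'm' : phi (pre v') <> m by rewrite phi_pre; apply/eqP.
rewrite -{1}(phi_pre v) -{1}(phi_pre v') (splitting_le phi_mono phi_lift phi_fibre) //.
split=> [/f_le vv' x [Lx /vv'] // | FvFv'].
have [j Jj fj] : exists2 j, J j & ~ f (pre v') j.
  apply: NNPP => nj; apply/v'm'/phi_fibre_m/common_sub_fibre => x Jx.
  by apply: NNPP => fx; apply: nj; exists x.
apply/f_le/(contract_le _ (f_prime _) fj _ FvFv'); first by case: (f_prime (pre v)).
by move=> r; apply/J_sub_L; apply: idealMl J_ideal Jj.
Qed.

Lemma spec_onto Q : prime_ideal_of L Q -> exists v, seteq Q (F v).
Proof.
move=> hQ; have [JQ | [j Jj Qj]] : subset J Q \/ exists2 j, J j & ~ Q j.
- have [|nsub] := classic (exists2 j, J j & ~ Q j); [by right | left].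
  by move=> x Jx; apply: NNPP => Qx; apply: nsub; exists x.
- exists m => x; rewrite (prime_sup_field L_subring (glued_inv fibre_max
    fibre_incomparable N_ideal g_iso) hQ JQ).
  by rewrite (contract_fibre pre_m_mem).
have Lj r : L (r * j) by apply/J_sub_L; apply: idealMl J_ideal Jj.
have [hP QP] := conductor_prime L_subring Lj hQ Qj.
have [t ht] := f_onto hP.
have tm : phi t <> m.
  have L_j : L j by rewrite -[j]mul1r.
  move=> /phi_fibre_m/common_sub_fibre/(_ j Jj)/ht /= Qjj.
  by have [_ _ Qmul] := hQ; case: (Qmul _ _ L_j L_j Qjj).
have pre_t : pre (phi t) = t by apply: (splitting_inj phi_fibre); rewrite ?phi_pre.
by exists (phi t) => x; rewrite pre_t -QP; split=> -[Lx /ht].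
Qed.

Theorem glued_spec_iso : spec_iso_to L V.
Proof.
exists (fun v => F v); split=> [v | | ]; first exact: contract_prime (f_prime _).
- exact: spec_le.
- exact: spec_onto.
Qed.

End SpectrumOfSplitting.

Theorem theorem6p1 (dV dU : Order.disp_t) (V : porderType dV) (U : porderType dU)
    (m : V) (phi : U -> V) (R : comPzRingType) :
  maximal m -> pos_height m ->
  splitting m phi ->
  spec_iso_to (@setT_R R) U ->
  noetherian_of (@setT_R R) ->
  (forall M N : R -> Prop, maximal_ideal_of (@setT_R R) M ->
     maximal_ideal_of (@setT_R R) N -> quot_iso M N) ->
  exists L : R -> Prop, [/\ is_subring L, noetherian_of L & spec_iso_to L V].
Proof.
move=> _ _ [phi_onto phi_mono [Ms [_ Ms_max_height phi_fibre_m]] phi_fibre phi_lift].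
move=> [f [f_prime f_le f_onto]] hN hiso.
have Ms_max u : u \in Ms -> maximal u by case/Ms_max_height.
have [pre phi_pre] := functional_choice _ phi_onto.
pose i0 : seq_sub Ms := SeqSub (pre_m_mem phi_fibre_m phi_pre).
have M_max := fibre_max Ms_max hN f_prime f_le f_onto.
have ex_g (i : seq_sub Ms) : exists g, quot_iso_by (f (val i)) (f (val i0)) g.
  by apply: hiso; apply: M_max.
have [g g_iso] := functional_choice _ ex_g.
have N_ideal : ideal (f (val i0)) by case: (f_prime (val i0)).
exists (glued (f (val i0)) g); split.
- exact: glued_subring N_ideal g_iso.
- exact: glued_noetherian M_max (fibre_incomparable Ms_max f_le) N_ideal g_iso hN.
- exact: (glued_spec_iso phi_mono phi_lift phi_fibre_m phi_fibre Ms_max hN f_prime f_le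
    f_onto N_ideal g_iso phi_pre).
Qed.
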